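(* With $d_k$ as defined below, for every $0\le k\le q-1$, $$d_k=-(-1)^{k+\lfloor k/p\rfloor}\,k!\binom{q/p-1}{\lfloor k/p\rfloor}.$$
   Context: $\mathbf{F}_q$ has characteristic $p$. $M(k,b,D)$ denotes the number of ordered $k$-tuples of pairwise distinct elements of $D\subseteq\mathbf{F}_q$ with sum $b$. $d_0=-1$ and $d_k=M(k,1,\mathbf{F}_q^* )-M(k,0,\mathbf{F}_q^* )$ for $k\ge1$. Binomial coefficients $\binom{x}{m}=x(x-1)\cdots(x-m+1)/m!$ for real $x$, integer $m\ge0$. *)

From HB Require Import structures.
From mathcomp Require Import all_boot all_order all_algebra all_field.
Set Implicit Arguments. Unset Strict Implicit. Unset Printing Implicit Defensive.
Import GRing.Theory Num.Theory.
Local Open Scope ring_scope.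

Definition Mcount (F : finFieldType) (k : nat) (b : F) (D : {pred F}) : nat :=
  #|[pred t : k.-tuple F | [&& uniq t, all (fun x => x \in D) t &
                               \sum_(x <- t) x == b]]|.

Definition Fstar (F : finFieldType) : {pred F} := [pred x : F | x != 0].

Definition dk (F : finFieldType) (k : nat) : int :=
  if k is 0 then -1
  else (@Mcount F k 1 (@Fstar F))%:Z - (@Mcount F k 0 (@Fstar F))%:Z.

From HB Require Import structures.
From mathcomp Require Import all_boot all_order all_algebra all_field.
Set Implicit Arguments. Unset Strict Implicit. Unset Printing Implicit Defensive.
Import GRing.Theory Num.Theory.
Local Open Scope ring_scope.

(* Let F be a finite field of characteristic p and m = |F|/p.  The proof is
   elementary double counting, in three sections.
   1. SubsetCounts.  Ordered tuples of distinct elements are counted by sets: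
      M(k,b,D) = k! N(k,b,D), where N counts k-subsets of D with sum b.
      Sorting the k-subsets of F by whether they contain 0 gives
      S(k,b) = N(k,b,F^* ) + N(k-1,b,F^* ), S(k,b) counting the k-subsets of
      F with sum b; hence e_k = N(k,1,F^* ) - N(k,0,F^* ) satisfies
      e_k = (S(k,1) - S(k,0)) - e_{k-1}, with e_0 = -1.
   2. PrimeCosets.  F is partitioned into the m cosets x + F_p.  The group of
      maps g : cosets -> F_p acts on F by x |-> x + g(coset of x).  If a k-set
      A meets some coset C in 0 < n < p points, changing g on C alone shifts
      the sum of g.A by any multiple of n, in particular by -1; so the g with
      sum(g.A) = 1 and those with sum(g.A) = 0 are equinumerous.  Double
      counting gives S(k,1) - S(k,0) = G(k,1) - G(k,0), G counting the k-sets
      that are unions of cosets.  Such a set is a union of j = k/p cosets with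
      sum j * (0 + 1 + ... + (p-1)) = j * 'C(p,2), whence (Sall_diff)
      S(k,1) - S(k,0) = -(-1)^(k+j) 'C(m,j) if p | k, and 0 otherwise.
   3. Conclusion.  Induction on k with Pascal's rule gives (dstar_val)
      e_k = -(-1)^(k+k/p) 'C(m-1,k/p), and d_k = k! e_k. *)

Lemma card_perm_tuples (T : finType) (k : nat) (s : seq T) :
  uniq s -> size s = k -> #|[pred t : k.-tuple T | perm_eq t s]| = k`!.
Proof.
move=> us sk.
rewrite -sk -size_permutations // cardE -(size_map val).
apply/perm_size/uniq_perm.
- by rewrite (map_inj_uniq val_inj) enum_uniq.
- exact: permutations_uniq.
move=> u; rewrite mem_permutations; apply/mapP/idP.
  by case=> t; rewrite mem_enum /= => pt ->.
move=> pu; have su : size u == size s by rewrite (perm_size pu).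
by exists (Tuple su); rewrite // mem_enum.
Qed.

Section SubsetCounts.
Variable F : finFieldType.

Definition Nset (D : {pred F}) (k : nat) (b : F) : nat :=
  #|[set A : {set F} | [&& A \subset D, #|A| == k & \sum_(x in A) x == b]]|.

Definition Sall (k : nat) (b : F) : nat :=
  #|[set A : {set F} | (#|A| == k) && (\sum_(x in A) x == b)]|.

(* Each k-set is the support of exactly k! tuples of distinct elements. *)
Lemma Mcount_Nset (k : nat) (b : F) (D : {pred F}) :
  Mcount k b D = (k`! * Nset D k b)%N.
Proof.
rewrite /Mcount /Nset -[LHS]sum1_card.
rewrite (partition_big (fun t : k.-tuple F => [set x in t]) predT) //=.
rewrite mulnC -sum_nat_const [RHS]big_mkcond /=.
apply: eq_bigr => A _; rewrite sum1_card inE.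
case: ifP => [/and3P[AD /eqP Ak /eqP Ab] | nA].
  rewrite -(card_perm_tuples (enum_uniq (mem A))); last by rewrite -cardE.
  apply: eq_card => t; rewrite -topredE /= !inE.
  apply/idP/idP.
    case/andP=> /and3P[ut _ _] /eqP tA.
    apply: uniq_perm => //; first exact: enum_uniq.
    by move=> x; rewrite mem_enum -tA inE.
  move=> pt.
  have tA : [set x in t] = A.
    by apply/setP => x; rewrite inE (perm_mem pt) mem_enum.
  rewrite tA eqxx andbT (perm_uniq pt) enum_uniq /=.
  rewrite (perm_big _ pt) big_enum /= Ab eqxx andbT.
  by apply/allP => x; rewrite (perm_mem pt) mem_enum => /(subsetP AD).
apply: eq_card0 => t; rewrite -topredE /= !inE.
apply/negbTE/negP => /andP[/and3P[ut tD tb] /eqP tA].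
move/negbT: nA; rewrite -tA; apply/negP/negPn/and3P; split.
- by apply/subsetP => x; rewrite inE => /(allP tD).
- by rewrite cardsE (card_uniqP ut) size_tuple.
rewrite (big_uniq _ ut) in tb.
by rewrite (eq_bigl (fun x => x \in t)) // => x; rewrite inE.
Qed.

Lemma sub_Fstar (A : {set F}) : (A \subset @Fstar F) = (0 \notin A).
Proof.
apply/subsetP/idP => [H | H x xA]; first by apply/negP => /H; rewrite inE eqxx.
by rewrite inE; apply: contraNneq H => <-.
Qed.

(* A k-subset of F either avoids 0, or is {0} plus a (k-1)-subset of F^*. *)
Lemma Sall_split k b : (0 < k)%N ->
  Sall k b = (Nset (@Fstar F) k b + Nset (@Fstar F) k.-1 b)%N.
Proof.
move=> k_gt0; rewrite /Sall /Nset.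
set X := [set A | _].
rewrite -(cardsID [set A : {set F} | 0 \in A] X) addnC.
congr (_ + _)%N.
  by apply: eq_card => A; rewrite !inE sub_Fstar; case: (0 \in A).
set Y := (Z in _ = #|Z|).
rewrite -(@card_in_imset _ _ (fun A => 0 |: A) Y); last first.
  move=> A B; rewrite !inE !sub_Fstar => /andP[A0 _] /andP[B0 _] eAB.
  by rewrite -(setU1K A0) -(setU1K B0) eAB.
apply: eq_card => B; rewrite !inE; apply/idP/idP.
  case/andP => /andP[/eqP Bk /eqP Bb] B0.
  apply/imsetP; exists (B :\ 0); last by rewrite setD1K.
  rewrite inE sub_Fstar !inE eqxx /=.
  rewrite -(setD1K B0) cardsU1 !inE eqxx /= in Bk.
  rewrite -(setD1K B0) big_setU1 ?inE ?eqxx //= add0r in Bb.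
  by rewrite -Bk Bb eqxx add1n /= eqxx.
case/imsetP => A; rewrite inE sub_Fstar => /andP[A0 /andP[/eqP Ak /eqP Ab]] ->.
rewrite !inE eqxx cardsU1 A0 Ak big_setU1 //= add0r Ab eqxx andbT.
by rewrite add1n prednK ?eqxx.
Qed.

Lemma Nset0 b : Nset (@Fstar F) 0 b = (b == 0 : nat).
Proof.
case: eqP => [-> | nb].
  change (Nset (@Fstar F) 0 0 = 1%N).
  rewrite -(cards1 (set0 : {set F})); apply: eq_card => A; rewrite !inE.
  apply/idP/eqP => [/and3P[_ /eqP/cards0_eq -> _] // | ->].
  by rewrite sub_Fstar inE cards0 big_set0 !eqxx.
apply: eq_card0 => A; rewrite !inE.
apply/negP => /and3P[_ /eqP/cards0_eq -> /eqP].
by rewrite big_set0 => /esym.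
Qed.

End SubsetCounts.

Section PrimeCosets.
Variables (F : finFieldType) (p : nat).
Hypothesis hp : p \in [pchar F].

Let p_prime : prime p := pcharf_prime hp.
Let p_gt0 : (0 < p)%N := prime_gt0 p_prime.
Let p0 : p%:R = 0 :> F := pcharf0 hp.

Lemma natr_modp n : (n %% p)%:R = n%:R :> F.
Proof. by rewrite [in RHS](divn_eq n p) natrD natrM p0 mulr0 add0r. Qed.

Lemma natr_inj_ltp (i j : nat) :
  (i < p)%N -> (j < p)%N -> i%:R = j%:R :> F -> i = j.
Proof.
wlog le_ij : i j / (i <= j)%N.
  move=> H ip jp e; case: (leqP i j) => [|/ltnW] le; first exact: H.
  exact/esym/H.
move=> ip jp e; apply/eqP; rewrite -(modn_small ip) -(modn_small jp) eq_sym.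
by rewrite eqn_mod_dvd // (dvdn_pcharf hp) natrB // e subrr.
Qed.

Definition cls (x : F) : {set F} := [set x + (val i)%:R | i : 'I_p].

Lemma clsP x y : reflect (exists n : nat, y = x + n%:R) (y \in cls x).
Proof.
apply: (iffP imsetP) => [[i _ ->] | [n ->]]; first by exists (val i).
by exists (Ordinal (ltn_pmod n p_gt0)); rewrite //= natr_modp.
Qed.

Lemma cls_refl x : x \in cls x.
Proof. by apply/clsP; exists 0%N; rewrite addr0. Qed.

Lemma cls_sym x y : y \in cls x -> x \in cls y.
Proof.
case/clsP => n ->; apply/clsP; exists (n * p.-1)%N.
have e : (n + n * p.-1 = n * p)%N by rewrite -{1}(muln1 n) -mulnDr add1n prednK.
by rewrite -addrA -natrD e natrM p0 mulr0 addr0.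
Qed.

Lemma cls_trans x y z : y \in cls x -> z \in cls y -> z \in cls x.
Proof.
case/clsP => n -> /clsP[m ->]; apply/clsP.
by exists (n + m)%N; rewrite natrD addrA.
Qed.

Lemma cls_eq x y : y \in cls x -> cls y = cls x.
Proof.
move=> yx; apply/setP => z; apply/idP/idP => [zy | zx].
  exact: cls_trans zy.
exact: cls_trans (cls_sym yx) zx.
Qed.

Lemma cls_param_inj x : injective (fun i : 'I_p => x + (val i)%:R :> F).
Proof.
move=> i j /addrI e; apply: val_inj.
exact: natr_inj_ltp (ltn_ord i) (ltn_ord j) e.
Qed.

Lemma card_cls x : #|cls x| = p.
Proof. by rewrite card_imset ?card_ord //; exact: cls_param_inj. Qed.

Definition sum_Fp : F := \sum_(i < p) (i : nat)%:R.

Lemma sum_Fp_bin2 : sum_Fp = 'C(p, 2)%:R.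
Proof. by rewrite /sum_Fp -bin2_sum big_mkord natr_sum. Qed.

Lemma sum_cls x : \sum_(y in cls x) y = sum_Fp.
Proof.
rewrite big_imset /=; last by move=> i j _ _; apply: cls_param_inj.
by rewrite big_split /= sumr_const card_ord -mulr_natr p0 mulr0 add0r.
Qed.

Definition Pcls : {set {set F}} := [set cls x | x in [set: F]].

Lemma Pcls_partition : partition Pcls [set: F].
Proof.
have -> : Pcls = equivalence_partition (fun x y => y \in cls x) [set: F].
  by apply: eq_imset => x; apply/setP => y; rewrite !inE.
apply: equivalence_partitionP => x y z _ _ _; split; first exact: cls_refl.
move=> xy; apply/idP/idP => [xz | yz]; first exact: cls_trans (cls_sym xy) xz.
exact: cls_trans xy yz.
Qed.

Lemma card_Pcls : #|Pcls| = (#|F| %/ p)%N.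
Proof.
suff <- : (#|Pcls| * p)%N = #|F| by rewrite mulnK.
rewrite -cardsT (card_partition Pcls_partition) -sum_nat_const.
by apply: eq_bigr => C /imsetP[x _ ->]; rewrite card_cls.
Qed.

Lemma card_Pcls_gt0 : (0 < #|F| %/ p)%N.
Proof.
by rewrite -card_Pcls card_gt0; apply/set0Pn; exists (cls 0); apply: imset_f.
Qed.

Definition saturated (A : {set F}) := [forall x in A, cls x \subset A].

Definition cls_parts (A : {set F}) : {set {set F}} :=
  [set C in Pcls | C \subset A].

Lemma cls_parts_sub (A : {set F}) : cls_parts A \subset Pcls.
Proof. by apply/subsetP => C; rewrite inE => /andP[]. Qed.

Lemma saturated_cover A : saturated A -> cover (cls_parts A) = A.
Proof.
move=> satA; apply/setP => x; apply/bigcupP/idP => [[C] | xA].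
  by rewrite inE => /andP[_ /subsetP CA] /CA.
exists (cls x); last exact: cls_refl.
by rewrite inE imset_f ?inE //= (forall_inP satA).
Qed.

Lemma cover_saturated (Q : {set {set F}}) :
  Q \subset Pcls -> saturated (cover Q) /\ cls_parts (cover Q) = Q.
Proof.
move=> QP.
have clsQ x C : C \in Q -> x \in C -> cls x = C.
  move=> CQ xC; have /imsetP[y _ Cy] := subsetP QP _ CQ.
  by rewrite Cy in xC *; apply: cls_eq.
split.
  apply/forall_inP => x /bigcupP[C CQ xC].
  by rewrite (clsQ x C CQ xC); exact: bigcup_sup.
apply/setP => C; rewrite inE; apply/andP/idP => [[CP CA] | CQ].
  case/imsetP: CP => y _ Cy.
  have /bigcupP[C' C'Q yC'] : y \in cover Q.
    by apply: (subsetP CA); rewrite Cy cls_refl.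
  by rewrite Cy (clsQ y C' C'Q yC').
by split; [exact: (subsetP QP) | exact: bigcup_sup].
Qed.

Lemma card_cover (Q : {set {set F}}) :
  Q \subset Pcls -> #|cover Q| = (p * #|Q|)%N.
Proof.
move=> QP; have tQ := trivIsetS QP (partition_trivIset Pcls_partition).
rewrite -(eqP tQ) mulnC -sum_nat_const.
by apply: eq_bigr => C /(subsetP QP)/imsetP[x _ ->]; exact: card_cls.
Qed.

Lemma sum_cover (Q : {set {set F}}) :
  Q \subset Pcls -> \sum_(x in cover Q) x = #|Q|%:R * sum_Fp.
Proof.
move=> QP; have tQ := trivIsetS QP (partition_trivIset Pcls_partition).
rewrite big_trivIset // mulr_natl -sumr_const.
by apply: eq_bigr => C /(subsetP QP)/imsetP[x _ ->]; exact: sum_cls.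
Qed.

Lemma saturated_card (A : {set F}) :
  saturated A -> #|A| = (p * #|cls_parts A|)%N.
Proof.
by move=> satA; rewrite -{1}(saturated_cover satA) card_cover // cls_parts_sub.
Qed.

Lemma saturated_sum (A : {set F}) :
  saturated A -> \sum_(x in A) x = #|cls_parts A|%:R * sum_Fp.
Proof.
by move=> satA; rewrite -{1}(saturated_cover satA) sum_cover // cls_parts_sub.
Qed.

(* Unions of j cosets correspond to j-sets of cosets. *)
Lemma card_saturated j :
  #|[set A : {set F} | saturated A & #|A| == (p * j)%N]| = 'C(#|F| %/ p, j).
Proof.
rewrite -card_Pcls -cards_draws -(@card_in_imset _ _ (@cover F)); last first.
  move=> Q1 Q2; rewrite !inE => /andP[Q1P _] /andP[Q2P _] e.
  by rewrite -(cover_saturated Q1P).2 -(cover_saturated Q2P).2 e.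
apply: eq_card => A; rewrite inE; apply/andP/imsetP => [[satA /eqP Ak] | [Q]].
  exists (cls_parts A); last by rewrite saturated_cover.
  by rewrite inE cls_parts_sub /= -(eqn_pmul2l p_gt0) -saturated_card // Ak eqxx.
rewrite inE => /andP[QP /eqP Qj] ->; split; first exact: (cover_saturated QP).1.
by rewrite card_cover // Qj.
Qed.

Definition translate (g : {ffun {set F} -> 'I_p}) (x : F) : F :=
  x + (val (g (cls x)))%:R.

Lemma translate_cls g x : translate g x \in cls x.
Proof. by apply/clsP; exists (val (g (cls x))). Qed.

Lemma translate_inj g : injective (translate g).
Proof.
move=> x y e.
have cxy : cls x = cls y.
  by rewrite -(cls_eq (translate_cls g x)) e (cls_eq (translate_cls g y)).
by move: e; rewrite /translate cxy => /addIr.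
Qed.

Lemma translate_saturated g (A : {set F}) : saturated A -> translate g @: A = A.
Proof.
move=> satA; apply/eqP; rewrite eqEcard card_imset; last exact: translate_inj.
rewrite leqnn andbT; apply/subsetP => y /imsetP[x xA ->].
exact: (subsetP (forall_inP satA x xA)) _ (translate_cls g x).
Qed.

Lemma sum_translate g (A : {set F}) :
  \sum_(x in translate g @: A) x =
  \sum_(x in A) x + \sum_(x in A) (val (g (cls x)))%:R.
Proof.
rewrite big_imset /=; first by rewrite big_split.
by move=> x y _ _; apply: translate_inj.
Qed.

Definition ntrans (A : {set F}) (b : F) : nat :=
  #|[set g : {ffun {set F} -> 'I_p} | \sum_(x in translate g @: A) x == b]|.

Definition shift (C0 : {set F}) (a : nat) (g : {ffun {set F} -> 'I_p}) :
    {ffun {set F} -> 'I_p} :=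
  [ffun C => if C == C0 then Ordinal (ltn_pmod (val (g C) + a) p_gt0) else g C].

Lemma shift_inj C0 a : injective (shift C0 a).
Proof.
move=> g1 g2 /ffunP e; apply/ffunP => C; move: (e C); rewrite !ffunE.
case: eqP => // _ /(congr1 val) /= /eqP.
by rewrite eqn_modDr !modn_small // => /eqP e'; exact: val_inj.
Qed.

Lemma sum_translate_shift C0 a g (A : {set F}) :
  \sum_(x in translate (shift C0 a g) @: A) x =
  \sum_(x in translate g @: A) x + (a * #|[set x in A | cls x == C0]|)%:R.
Proof.
rewrite !sum_translate -!addrA; congr (_ + _).
rewrite (bigID (fun x => cls x == C0)) [in RHS](bigID (fun x => cls x == C0)) /=.
rewrite addrAC; congr (_ + _); last first.
  by apply: eq_bigr => x /andP[_ /negbTE h]; rewrite ffunE h.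
rewrite natrM mulr_natr -sumr_const.
have -> : \sum_(x in [set x in A | cls x == C0]) (a%:R : F) =
          \sum_(x in A | cls x == C0) a%:R by apply: eq_bigl => x; rewrite inE.
rewrite -big_split /=; apply: eq_bigr => x /andP[_ /eqP ->].
by rewrite ffunE eqxx /= natr_modp natrD.
Qed.

Lemma partial_cls (A : {set F}) :
  ~~ saturated A -> exists C0, (0 < #|[set x in A | cls x == C0]| < p)%N.
Proof.
case/forall_inPn => x0 x0A nC; exists (cls x0).
set B := [set x in A | _].
have B_gt0 : (0 < #|B|)%N by apply/card_gt0P; exists x0; rewrite inE x0A eqxx.
have BC0 : B \subset cls x0.
  by apply/subsetP => x; rewrite inE => /andP[_ /eqP <-]; exact: cls_refl.
rewrite B_gt0 ltn_neqAle -{2}(card_cls x0) subset_leq_card // andbT.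
apply: contra nC; rewrite -(card_cls x0) => /eqP BC0e.
have <- : B = cls x0 by apply/eqP; rewrite eqEcard BC0 BC0e leqnn.
by apply/subsetP => x; rewrite inE => /andP[].
Qed.

Lemma natr_neg_inverse n : (0 < n < p)%N -> exists a : nat, (a * n)%:R = -1 :> F.
Proof.
case/andP => n_gt0 n_lt.
have cop : coprime n p by rewrite coprime_sym prime_coprime // gtnNdvd.
case: (Bezoutr n p_gt0) => a _.
rewrite (eqP cop) (dvdn_pcharf hp) natrD => /eqP ea.
by exists a; apply/eqP; rewrite -subr_eq0 opprK addrC ea.
Qed.

(* For A not a union of cosets, the g giving sum 1 and those giving sum 0
   are in bijection: shift on a partially met coset. *)
Lemma ntrans_not_saturated (A : {set F}) :
  ~~ saturated A -> ntrans A 1 = ntrans A 0.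
Proof.
case/partial_cls => C0 /natr_neg_inverse[a ea].
rewrite /ntrans -[RHS](card_preimset _ (@shift_inj C0 a)); apply: eq_card => g.
by rewrite !inE sum_translate_shift ea subr_eq0.
Qed.

Definition Gunion (k : nat) (b : F) : nat :=
  #|[set A : {set F} | [&& saturated A, #|A| == k & \sum_(x in A) x == b]]|.

(* Every g permutes the k-sets, so counting pairs (A, g) with sum(g.A) = b
   gives |group| * S(k,b). *)
Lemma sum_ntrans k b :
  (\sum_(A : {set F} | #|A| == k) ntrans A b =
   #|{ffun {set F} -> 'I_p}| * Sall k b)%N.
Proof.
rewrite /ntrans; under eq_bigr => A _ do rewrite -sum1_card.
rewrite (exchange_big_dep predT) //= -sum_nat_const; apply: eq_bigr => g _.
rewrite sum1_card /Sall.
rewrite -(card_preimset _ (imset_inj (@translate_inj g))); apply: eq_card => A.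
by rewrite -topredE /= !inE card_imset //; exact: translate_inj.
Qed.

(* Unions of cosets are fixed by every g, so they contribute |group| * G(k,b). *)
Lemma sum_ntrans_saturated k b :
  (\sum_(A : {set F} | #|A| == k) ntrans A b =
   \sum_(A : {set F} | (#|A| == k) && ~~ saturated A) ntrans A b +
   #|{ffun {set F} -> 'I_p}| * Gunion k b)%N.
Proof.
rewrite (bigID saturated) /= addnC; congr (_ + _)%N.
rewrite mulnC -sum_nat_const.
rewrite [RHS](eq_bigl (fun A : {set F} =>
                 ((#|A| == k) && saturated A) && (\sum_(x in A) x == b)));
  last by move=> A; rewrite inE; case: (saturated A); case: (#|A| == k).
rewrite [RHS]big_mkcondr; apply: eq_bigr => A /andP[_ satA].
rewrite /ntrans; case: eqP => [eb | neb].
  by apply: eq_card => g; rewrite !inE translate_saturated // eb eqxx.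
by apply: eq_card0 => g; rewrite !inE translate_saturated //; exact/eqP.
Qed.

(* The non-unions cancel between b = 1 and b = 0 (ntrans_not_saturated). *)
Lemma Sall_Gunion k :
  (Sall k (1%R : F) + Gunion k 0%R = Sall k (0%R : F) + Gunion k 1%R)%N.
Proof.
have cG : (0 < #|{ffun {set F} -> 'I_p}|)%N.
  by rewrite card_ffun card_ord expn_gt0 p_gt0.
apply/eqP; rewrite -(eqn_pmul2l cG) !mulnDr -!sum_ntrans !sum_ntrans_saturated.
rewrite -!addnA; apply/eqP; congr (_ + _)%N; last by rewrite addnC.
by apply: eq_bigr => A /andP[_ nsatA]; apply: ntrans_not_saturated.
Qed.

(* A union of cosets has size p j and sum j * sum_Fp, j its number of cosets. *)
Lemma Gunion_val k b : Gunion k b =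
  if (p %| k)%N && ((k %/ p)%:R * sum_Fp == b)
  then 'C(#|F| %/ p, k %/ p) else 0%N.
Proof.
have parts_k A : saturated A -> #|A| = k -> #|cls_parts A| = (k %/ p)%N.
  by move=> satA <-; rewrite saturated_card // mulKn.
rewrite /Gunion; case: ifP => [/andP[pk /eqP sb] | nkb]; last first.
  apply: eq_card0 => A; rewrite !inE; apply/negP => /and3P[satA /eqP Ak /eqP Ab].
  move: nkb; rewrite -Ab saturated_sum // parts_k //.
  by rewrite -Ak saturated_card // dvdn_mulr ?eqxx.
rewrite -card_saturated mulnC divnK //; apply: eq_card => A; rewrite !inE.
apply/and3P/andP => [[] | [satA /eqP Ak]] //; split => //; first exact/eqP.
by rewrite saturated_sum // parts_k // sb.
Qed.

Lemma Sall_diff k : (Sall k (1 : F))%:Z - (Sall k (0 : F))%:Z =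
  if (p %| k)%N then - ((-1) ^+ (k + k %/ p) * ('C(#|F| %/ p, k %/ p))%:Z) else 0.
Proof.
have -> : (Sall k (1 : F))%:Z - (Sall k (0 : F))%:Z =
          (Gunion k 1)%:Z - (Gunion k 0)%:Z.
  apply/eqP; rewrite subr_eq addrAC eq_sym subr_eq -!PoszD; apply/eqP.
  by congr Posz; rewrite addnC Sall_Gunion addnC.
rewrite !Gunion_val; have [pk | npk] := boolP (p %| k)%N; last first.
  by rewrite /= subrr.
have kj : k = (p * (k %/ p))%N by rewrite mulnC divnK.
set j := (k %/ p)%N.
have one0 : (1 : F) != 0 := oner_neq0 F.
case: (even_prime p_prime) => [p2 | p_odd].
  have -> : sum_Fp = 1 by rewrite sum_Fp_bin2 p2.
  have -> : j%:R = (odd j)%:R :> F by rewrite -modn2 -[in LHS]natr_modp p2.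
  rewrite mulr1 -signr_odd kj p2 oddD oddM /=.
  case: (odd j) => /=; first by rewrite eqxx (negbTE one0) subr0 mulN1r opprK.
  by rewrite eq_sym (negbTE one0) eqxx sub0r expr0 mul1r.
have -> : sum_Fp = 0.
  rewrite sum_Fp_bin2; apply/eqP; rewrite -(dvdn_pcharf hp) prime_dvd_bin //.
  by rewrite odd_prime_gt2.
rewrite mulr0 eq_sym (negbTE one0) eqxx sub0r -signr_odd kj oddD oddM p_odd /=.
by rewrite addbb expr0 mul1r.
Qed.

End PrimeCosets.

Section Conclusion.
Variables (F : finFieldType) (p : nat).
Hypothesis hp : p \in [pchar F].

Definition dstar (k : nat) : int :=
  (Nset (@Fstar F) k 1)%:Z - (Nset (@Fstar F) k 0)%:Z.

Lemma dstar0 : dstar 0 = -1.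
Proof. by rewrite /dstar !Nset0 eqxx (negbTE (oner_neq0 F)). Qed.

Lemma dk_dstar k : dk F k = (k`!)%:Z * dstar k.
Proof.
case: k => [|k]; first by rewrite dstar0.
by rewrite /dk !Mcount_Nset !PoszM -mulrBr.
Qed.

Lemma dstar_rec k :
  dstar k.+1 = (Sall k.+1 (1 : F))%:Z - (Sall k.+1 (0 : F))%:Z - dstar k.
Proof. by rewrite !Sall_split // /dstar /= !PoszD opprD addrACA addrK. Qed.

Lemma dstar_val k :
  dstar k = - ((-1) ^+ (k + k %/ p) * ('C(#|F| %/ p - 1, k %/ p))%:Z).
Proof.
elim: k => [|k IH]; first by rewrite dstar0 div0n bin0 mul1r.
rewrite dstar_rec (Sall_diff hp) IH divnS ?(prime_gt0 (pcharf_prime hp)) //.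
have mS : (#|F| %/ p = (#|F| %/ p - 1).+1)%N.
  by rewrite subn1 prednK // (card_Pcls_gt0 hp).
case: ifP => pk /=; last first.
  by rewrite add0n sub0r opprK addSn exprS mulN1r mulNr opprK.
rewrite pk add1n {1}mS binS PoszD !addSn !addnS !exprS !mulN1r !opprK mulrDr.
by rewrite opprD -addrA addNr addr0.
Qed.

End Conclusion.

Unset Implicit Arguments.

Theorem corollary2p5 (F : finFieldType) (p k : nat)
  (hp : p \in [pchar F]) (hk : (k <= #|F| - 1)%N) :
  dk F k = - ((-1) ^+ (k + k %/ p) * (k`! * 'C(#|F| %/ p - 1, k %/ p))%:Z).
Proof.
by rewrite dk_dstar (dstar_val hp) PoszM mulrN mulrCA.
Qed.
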